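(* Let $\mathcal M=\mathcal M_4$ and $n\ge1$. Then $m_{\mathrm{opt}}(n)<4b(n)\le 4\log_2(n+1)$.
   Context: Let $\mathbf X=\{X_1,\dots,X_n\}$ with the uniform measure. For $1\le m\le n$ let $\mathcal X_m$ be the set of finite sequences $\chi=(\chi_1,\dots,\chi_\ell)$ in $\mathbf X$ with exactly $m$ distinct entries and with $\chi_\ell$ different from all earlier entries; $\ell(\chi)$ is the length, $\chi$ has weight $n^{-\ell(\chi)}$, and $E_m[f]=\sum_{\chi\in\mathcal X_m}f(\chi)n^{-\ell(\chi)}$. Let $t_j(\chi)$ be the least $t\ge 0$ with $|\{\chi_1,\dots,\chi_t\}|=j$ ($0\le j\le m$) and $\tau_j(\chi)=t_{j+1}(\chi)-t_j(\chi)-1$ for $1\le j\le m-1$. Let $b(j)=(1+\frac1j)\log_2(j+1)-1$. In model $\mathcal M_4$ (complete memory, numbered shelves) the average total cost is $F(m)=2m\,b(n)\,E_m[1/\ell]+\sum_{j=1}^{m-1}E_m[\tau_j/\ell]\,\frac{j+1}{2}$, and $m_{\mathrm{opt}}(n)$ is the smallest $m\in\{1,\dots,n\}$ minimizing $F(m)$. *)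

From Stdlib Require Import Reals Lra Lia List Arith ClassicalEpsilon.
Import ListNotations.
Open Scope R_scope.

(* The ground set X = {X_1,...,X_n} is represented by {0,...,n-1}. *)

Fixpoint all_seqs (n l : nat) : list (list nat) :=
  match l with
  | O => [ [] ]
  | S l' => flat_map (fun s => map (fun x => s ++ [x]) (seq 0 n)) (all_seqs n l')
  end.

Definition ndist (s : list nat) : nat := length (nodup Nat.eq_dec s).

(* chi in X_m : exactly m distinct entries and the last entry differs from
   all earlier ones (in particular chi is nonempty). *)
Definition inXm (m : nat) (s : list nat) : bool :=
  Nat.eqb (ndist s) m &&
  match rev s with
  | [] => false
  | x :: r => negb (existsb (Nat.eqb x) r)
  end.

Definition series_val (u : nat -> R) : R :=
  epsilon (inhabits 0) (fun L => infinite_sum u L).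

Definition finsum (l : list R) : R := fold_right Rplus 0 l.

(* E_m[f] = sum_{chi in X_m} f(chi) n^{-l(chi)}, grouped by length l. *)
Definition Em (n m : nat) (f : list nat -> R) : R :=
  series_val (fun l =>
    finsum (map (fun s => if inXm m s then f s / (INR n ^ l) else 0)
                (all_seqs n l))).

Definition tj (s : list nat) (j : nat) : nat :=
  match find (fun t => Nat.eqb (ndist (firstn t s)) j) (seq 0 (S (length s))) with
  | Some t => t
  | None => O
  end.

Definition tauj (s : list nat) (j : nat) : nat := (tj s (S j) - tj s j - 1)%nat.

Definition log2 (x : R) : R := ln x / ln 2.

Definition b (x : R) : R := (1 + 1 / x) * log2 (x + 1) - 1.

(* Average total cost in model M_4 *)
Definition F4 (n m : nat) : R :=
  2 * INR m * b (INR n) * Em n m (fun s => / INR (length s))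
  + finsum (map (fun j => Em n m (fun s => INR (tauj s j) / INR (length s))
                          * ((INR j + 1) / 2))
                (seq 1 (m - 1))).

(* smallest m in {1,...,n} minimizing F4 n m *)
Definition mopt (n : nat) : nat :=
  fold_left (fun best k => if Rlt_dec (F4 n k) (F4 n best) then k else best)
            (seq 2 (n - 1)) 1%nat.

From Stdlib Require Import Reals Lra Lia List ZArith Classical ClassicalEpsilon.
Import ListNotations.
Open Scope R_scope.

(** View [E_m] as an expectation over an infinite uniform word [u]: the
    partial sums of the series defining [E_m[f]] are averages, over all words
    of length [L], of [f] at the word stopped at time [t_m] (words that have
    not yet shown [m] distinct letters contribute 0).  Hence [F(m)] is the
    limit of the averages of a per-word [cost n m (stopped m u)], which equals
    [(2 m b + sum_j tau_j (j+1)/2) / (m + sum_j tau_j)].  For an integer [k]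
    with [k < 4 b(n) <= k + 1], every waiting time [tau_j] with [j < k] has
    weight [(j+1)/2 <= 2 b(n)] and every [tau_j] with [j >= k] has weight
    [>= 2 b(n)]; so along every word the cost of stopping at [t_k] is at most
    [2 b(n)] and at most the cost of stopping at any later [t_m].  Words of
    length [L] that miss a letter have proportion [<= n ((n-1)/n)^L -> 0], so
    [F(k) <= F(m)] for all [k <= m <= n] and [m_opt(n) <= k < 4 b(n)]. *)

Lemma finsum_app (l1 l2 : list R) : finsum (l1 ++ l2) = finsum l1 + finsum l2.
Proof. induction l1; simpl; [lra | rewrite IHl1; lra]. Qed.

Lemma finsum_plus {A} (f g : A -> R) (l : list A) :
  finsum (map (fun x => f x + g x) l) = finsum (map f l) + finsum (map g l).
Proof. induction l; simpl; [lra | rewrite IHl; lra]. Qed.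

Lemma finsum_scal {A} (c : R) (f : A -> R) (l : list A) :
  finsum (map (fun x => c * f x) l) = c * finsum (map f l).
Proof. induction l; simpl; [lra | rewrite IHl; lra]. Qed.

Lemma finsum_div {A} (c : R) (f : A -> R) (l : list A) :
  finsum (map (fun x => f x / c) l) = finsum (map f l) / c.
Proof. induction l; simpl; unfold Rdiv in *; [lra | rewrite IHl; lra]. Qed.

Lemma finsum_le {A} (f g : A -> R) (l : list A) :
  (forall x, In x l -> f x <= g x) -> finsum (map f l) <= finsum (map g l).
Proof.
  induction l as [|a l IH]; simpl; intros H; [lra|].
  assert (f a <= g a) by auto.
  assert (finsum (map f l) <= finsum (map g l)) by auto.
  lra.
Qed.

Lemma finsum_ext {A} (f g : A -> R) (l : list A) :
  (forall x, In x l -> f x = g x) -> finsum (map f l) = finsum (map g l).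
Proof.
  induction l; simpl; intros H; [lra|].
  rewrite H by auto. rewrite IHl by auto. lra.
Qed.

Lemma finsum_const {A} (c : R) (l : list A) :
  finsum (map (fun _ => c) l) = c * INR (length l).
Proof. induction l; simpl length; rewrite ?S_INR; simpl; [lra | rewrite IHl; lra]. Qed.

Lemma finsum_nonneg {A} (f : A -> R) (l : list A) :
  (forall x, In x l -> 0 <= f x) -> 0 <= finsum (map f l).
Proof.
  intros H. apply Rle_trans with (finsum (map (fun _ : A => 0) l)).
  - rewrite finsum_const. lra.
  - apply finsum_le. exact H.
Qed.

Lemma finsum_term_le {A} (f : A -> R) (l : list A) (v : A) :
  In v l -> (forall x, In x l -> 0 <= f x) -> f v <= finsum (map f l).
Proof.
  induction l as [|a l IH]; simpl; intros Hv Hf; [contradiction|].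
  destruct Hv as [<- | Hv].
  - assert (0 <= finsum (map f l)) by (apply finsum_nonneg; auto). lra.
  - assert (0 <= f a) by auto. assert (f v <= finsum (map f l)) by auto. lra.
Qed.

Lemma finsum_flat_map {A B} (f : B -> R) (g : A -> list B) (l : list A) :
  finsum (map f (flat_map g l)) = finsum (map (fun x => finsum (map f (g x))) l).
Proof. induction l; simpl; [lra|]. rewrite map_app, finsum_app, IHl. lra. Qed.

Lemma finsum_swap {A B} (h : A -> B -> R) (l1 : list A) (l2 : list B) :
  finsum (map (fun x => finsum (map (fun y => h x y) l2)) l1)
  = finsum (map (fun y => finsum (map (fun x => h x y) l1)) l2).
Proof.
  induction l1; simpl.
  - rewrite finsum_const. lra.
  - rewrite IHl1, <- finsum_plus. reflexivity.
Qed.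

Lemma all_seqs_length (n L : nat) : length (all_seqs n L) = (n ^ L)%nat.
Proof.
  induction L as [|L IH]; simpl; auto.
  rewrite flat_map_concat_map, length_concat, map_map.
  erewrite map_ext by (intros; rewrite length_map, length_seq; reflexivity).
  rewrite <- IH. generalize (all_seqs n L). intros W.
  induction W; simpl; auto. rewrite IHW. lia.
Qed.

Lemma all_seqs_letters (n L : nat) (u : list nat) :
  In u (all_seqs n L) -> forall y, In y u -> (y < n)%nat.
Proof.
  revert u; induction L as [|L IH]; simpl; intros u Hu.
  - destruct Hu as [<- | []]. intros _ [].
  - apply in_flat_map in Hu. destruct Hu as [s [Hs Hx]].
    apply in_map_iff in Hx. destruct Hx as [x [<- Hx]]. apply in_seq in Hx.
    intros y Hy. apply in_app_or in Hy. destruct Hy as [Hy | [<- | []]].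
    + exact (IH s Hs y Hy).
    + lia.
Qed.

Lemma finsum_all_seqs_S (n L : nat) (f : list nat -> R) :
  finsum (map f (all_seqs n (S L))) =
  finsum (map (fun u => finsum (map (fun x => f (u ++ [x])) (seq 0 n))) (all_seqs n L)).
Proof.
  simpl all_seqs. rewrite finsum_flat_map.
  apply finsum_ext. intros u _. rewrite map_map. reflexivity.
Qed.

Lemma ndist_incl (a c : list nat) : incl a c -> (ndist a <= ndist c)%nat.
Proof.
  intros H. unfold ndist. apply NoDup_incl_length; [apply NoDup_nodup|].
  intros y Hy. apply nodup_In. apply nodup_In in Hy. auto.
Qed.

Lemma ndist_same (a c : list nat) : (forall y, In y a <-> In y c) -> ndist a = ndist c.
Proof.
  intros H. apply Nat.le_antisymm; apply ndist_incl; intros y Hy; apply H; auto.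
Qed.

Lemma ndist_snoc (u : list nat) (x : nat) :
  ndist (u ++ [x]) = if in_dec Nat.eq_dec x u then ndist u else S (ndist u).
Proof.
  destruct (in_dec Nat.eq_dec x u) as [Hi | Hn].
  - apply ndist_same. intros y. split; intros Hy.
    + apply in_app_or in Hy. destruct Hy as [| [<- | []]]; auto.
    + apply in_or_app; auto.
  - transitivity (ndist (x :: u)).
    + apply ndist_same. intros y. simpl. rewrite in_app_iff. simpl. tauto.
    + unfold ndist. simpl. destruct in_dec; [contradiction|reflexivity].
Qed.

Definition seen (s : list nat) (t : nat) : nat := ndist (firstn t s).

Lemma seen_step (s : list nat) (t : nat) :
  (seen s t <= seen s (S t) <= S (seen s t))%nat.
Proof.
  unfold seen. destruct (Nat.lt_ge_cases t (length s)) as [Hl | Hl].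
  - destruct (nth_error s t) as [x|] eqn:E; [|apply nth_error_None in E; lia].
    assert (Hfx : firstn (S t) s = firstn t s ++ [x]).
    { rewrite <- (firstn_skipn_middle t s E) at 1.
      rewrite firstn_app, firstn_length_le by lia.
      replace (S t - t)%nat with 1%nat by lia.
      rewrite firstn_all2 by (rewrite firstn_length_le; lia). reflexivity. }
    rewrite Hfx, ndist_snoc. destruct in_dec; lia.
  - rewrite !firstn_all2 by lia. lia.
Qed.

Lemma seen_le_ndist (s : list nat) (t : nat) : (seen s t <= ndist s)%nat.
Proof.
  apply ndist_incl. intros y Hy. rewrite <- (firstn_skipn t s). apply in_or_app; auto.
Qed.

Lemma seen_attains (s : list nat) (t j : nat) :
  (j <= seen s t)%nat -> exists t', (t' <= t)%nat /\ seen s t' = j.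
Proof.
  induction t as [|t IH]; intros H.
  - exists 0%nat. split; [lia|]. unfold seen, ndist in *. simpl in *. lia.
  - destruct (Nat.eq_dec j (seen s (S t))) as [E | E]; [exists (S t); auto|].
    pose proof (seen_step s t).
    destruct IH as [t' [? ?]]; [lia|]. exists t'. split; [lia | auto].
Qed.

Definition first_time (s : list nat) (j t : nat) : Prop :=
  (t <= length s)%nat /\ seen s t = j /\ forall y, (y < t)%nat -> seen s y <> j.

Lemma find_seq_first (p : nat -> bool) (a c x : nat) :
  find p (seq a c) = Some x ->
  p x = true /\ (a <= x < a + c)%nat /\ forall y, (a <= y < x)%nat -> p y = false.
Proof.
  revert a; induction c as [|c IH]; simpl; intros a H; [discriminate|].
  destruct (p a) eqn:Pa.
  - inversion H; subst. repeat split; auto; intros; lia.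
  - destruct (IH (S a) H) as [H1 [H2 H3]]. repeat split; auto; try lia.
    intros y Hy. destruct (Nat.eq_dec y a); [subst; auto | apply H3; lia].
Qed.

Lemma tj_le_length (s : list nat) (j : nat) : (tj s j <= length s)%nat.
Proof.
  unfold tj. destruct find eqn:E; [|lia]. apply find_seq_first in E. lia.
Qed.

Lemma tj_spec (s : list nat) (j : nat) : (j <= ndist s)%nat -> first_time s j (tj s j).
Proof.
  intros Hj. unfold tj.
  destruct (find (fun t => Nat.eqb (ndist (firstn t s)) j) (seq 0 (S (length s)))) eqn:E.
  - apply find_seq_first in E. destruct E as [H1 [H2 H3]].
    apply Nat.eqb_eq in H1. repeat split; auto; [lia|].
    intros y Hy. apply Nat.eqb_neq, (H3 y). lia.
  - exfalso. assert (Hl : seen s (length s) = ndist s) by (unfold seen; rewrite firstn_all; auto).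
    destruct (seen_attains s (length s) j ltac:(lia)) as [t' [? Ht']].
    pose proof (find_none _ _ E t') as F. rewrite in_seq in F.
    apply Nat.eqb_neq in F; [exact (F Ht') | lia].
Qed.

Lemma tj_eq (s : list nat) (j t : nat) : first_time s j t -> tj s j = t.
Proof.
  intros Ht.
  assert (Hs : first_time s j (tj s j)).
  { apply tj_spec. destruct Ht as [_ [<- _]]. apply seen_le_ndist. }
  destruct Ht as [_ [E1 M1]], Hs as [_ [E2 M2]].
  destruct (Nat.lt_trichotomy (tj s j) t) as [H | [H | H]]; auto;
    exfalso; [apply (M1 _ H E2) | apply (M2 _ H E1)].
Qed.

Lemma tj_1 (s : list nat) : (1 <= ndist s)%nat -> tj s 1 = 1%nat.
Proof.
  intros H. apply tj_eq. destruct s as [|a s]; [unfold ndist in H; simpl in H; lia|].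
  repeat split; [simpl; lia | intros y Hy; replace y with 0%nat by lia; discriminate].
Qed.

Lemma tj_lt (s : list nat) (j : nat) : (S j <= ndist s)%nat -> (tj s j < tj s (S j))%nat.
Proof.
  intros H. pose proof (tj_spec s (S j) H) as [_ [Hseen _]].
  destruct (seen_attains s (tj s (S j)) j ltac:(lia)) as [t' [Ht' Dt']].
  assert (t' <> tj s (S j)) by (intro E; rewrite E, Hseen in Dt'; lia).
  pose proof (tj_spec s j ltac:(lia)) as [_ [_ Hmin]].
  destruct (Nat.lt_ge_cases t' (tj s j)) as [Hlt|]; [exfalso; exact (Hmin _ Hlt Dt') | lia].
Qed.

Lemma tj_mono (s : list nat) (j j' : nat) :
  (j <= j')%nat -> (j' <= ndist s)%nat -> (tj s j <= tj s j')%nat.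
Proof.
  intros Hle Hn. induction Hle as [|j'' Hle IH]; auto.
  pose proof (tj_lt s j'' Hn). specialize (IH ltac:(lia)). lia.
Qed.

Lemma tj_firstn (s : list nat) (T j : nat) :
  (j <= ndist s)%nat -> (tj s j <= T)%nat -> (T <= length s)%nat ->
  tj (firstn T s) j = tj s j.
Proof.
  intros Hj HT Hl. pose proof (tj_spec s j Hj) as [A [B C]].
  assert (Hpre : forall t, (t <= T)%nat -> seen (firstn T s) t = seen s t).
  { intros t Ht. unfold seen. rewrite firstn_firstn. do 2 f_equal. lia. }
  apply tj_eq. repeat split.
  - rewrite firstn_length_le; lia.
  - rewrite Hpre; auto.
  - intros y Hy. rewrite Hpre by lia. auto.
Qed.

Lemma seen_snoc (s : list nat) (x t : nat) :
  (t <= length s)%nat -> seen (s ++ [x]) t = seen s t.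
Proof.
  intros H. unfold seen. rewrite firstn_app.
  replace (t - length s)%nat with 0%nat by lia. simpl. rewrite app_nil_r. reflexivity.
Qed.

Lemma tj_snoc (s : list nat) (x j : nat) :
  (j <= ndist s)%nat -> tj (s ++ [x]) j = tj s j.
Proof.
  intros Hj. pose proof (tj_spec s j Hj) as [A [B C]].
  apply tj_eq. repeat split.
  - rewrite length_app. lia.
  - rewrite seen_snoc; auto.
  - intros y Hy. rewrite seen_snoc by lia. auto.
Qed.

Lemma tj_snoc_new (s : list nat) (x : nat) :
  ~ In x s -> tj (s ++ [x]) (S (ndist s)) = S (length s).
Proof.
  intros Hx. apply tj_eq. repeat split.
  - rewrite length_app. simpl. lia.
  - unfold seen. rewrite firstn_all2 by (rewrite length_app; simpl; lia).
    rewrite ndist_snoc. destruct in_dec; [contradiction | reflexivity].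
  - intros y Hy. rewrite seen_snoc by lia. pose proof (seen_le_ndist s y). lia.
Qed.

Lemma tj_telescope (u : list nat) (m : nat) : (1 <= m)%nat -> (m <= ndist u)%nat ->
  INR (tj u m) = INR m + finsum (map (fun j => INR (tauj u j)) (seq 1 (m - 1))).
Proof.
  intros H1. induction m as [|m IH]; [lia|]. intros H2.
  destruct (Nat.eq_dec m 0) as [-> | Hm].
  - rewrite tj_1 by lia. simpl. lra.
  - replace (S m - 1)%nat with (S (m - 1)) by lia.
    rewrite seq_S, map_app, finsum_app. replace (1 + (m - 1))%nat with m by lia.
    pose proof (tj_lt u m H2).
    assert (E : tj u (S m) = (tj u m + tauj u m + 1)%nat) by (unfold tauj; lia).
    rewrite E, !plus_INR, IH, (S_INR m) by lia. simpl. lra.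
Qed.

(** * [E_m] as a limit of averages over words of fixed length

    A word [chi] in [X_m] is exactly a word stopped at the first time its
    [m]-th distinct letter appears.  Hence the partial sum of the series
    defining [E_m[f]] up to length [L] is the average, over all [n ^ L] words
    [u] of length [L], of [f] evaluated at [u] stopped at time [t_m(u)],
    counting only words that already contain [m] distinct letters. *)

Definition stopped (m : nat) (u : list nat) : list nat := firstn (tj u m) u.

Definition stopped_mean (n m : nat) (f : list nat -> R) (L : nat) : R :=
  finsum (map (fun u => if Nat.leb m (ndist u) then f (stopped m u) else 0)
              (all_seqs n L)) / INR n ^ L.

Definition Em_term (n m : nat) (f : list nat -> R) (l : nat) : R :=
  finsum (map (fun s => if inXm m s then f s / INR n ^ l else 0) (all_seqs n l)).

Lemma inXm_nil (m : nat) : inXm m [] = false.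
Proof. unfold inXm. simpl. apply Bool.andb_false_r. Qed.

Lemma inXm_snoc (m : nat) (u : list nat) (x : nat) :
  inXm m (u ++ [x]) = true <-> ndist (u ++ [x]) = m /\ ~ In x u.
Proof.
  unfold inXm. rewrite rev_unit, Bool.andb_true_iff, Nat.eqb_eq, Bool.negb_true_iff.
  assert (existsb (Nat.eqb x) (rev u) = true <-> In x u).
  { rewrite existsb_exists. split.
    - intros [y [Hy Ey]]. apply Nat.eqb_eq in Ey. subst. apply in_rev. exact Hy.
    - intros Hx. exists x. split; [apply in_rev in Hx; exact Hx | apply Nat.eqb_refl]. }
  destruct (existsb (Nat.eqb x) (rev u)); intuition congruence.
Qed.

Lemma stopped_snoc_old (m : nat) (u : list nat) (x : nat) :
  (m <= ndist u)%nat -> stopped m (u ++ [x]) = stopped m u.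
Proof.
  intros H. unfold stopped. rewrite tj_snoc, firstn_app by auto.
  pose proof (tj_le_length u m). replace (tj u m - length u)%nat with 0%nat by lia.
  simpl. apply app_nil_r.
Qed.

(** Extending a word by one letter: a word that had already reached [m]
    distinct letters keeps its stopped value (for all [n] letters), otherwise
    the extension reaches [m] exactly when it lies in [X_m]. *)
Lemma stopped_extend (n m : nat) (f : list nat -> R) (u : list nat) :
  finsum (map (fun x => if Nat.leb m (ndist (u ++ [x]))
                        then f (stopped m (u ++ [x])) else 0) (seq 0 n))
  = (if Nat.leb m (ndist u) then INR n * f (stopped m u) else 0)
    + finsum (map (fun x => if inXm m (u ++ [x]) then f (u ++ [x]) else 0) (seq 0 n)).
Proof.
  destruct (Nat.leb m (ndist u)) eqn:E.
  - apply Nat.leb_le in E.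
    rewrite (finsum_ext _ (fun _ => f (stopped m u))).
    2:{ intros x _. rewrite stopped_snoc_old by auto.
        replace (Nat.leb m (ndist (u ++ [x]))) with true; auto.
        symmetry. apply Nat.leb_le. rewrite ndist_snoc. destruct in_dec; lia. }
    rewrite (finsum_ext (fun x => if inXm m (u ++ [x]) then f (u ++ [x]) else 0)
                        (fun _ => 0)).
    2:{ intros x _. destruct (inXm m (u ++ [x])) eqn:I; auto.
        apply inXm_snoc in I. destruct I as [I1 I2]. rewrite ndist_snoc in I1.
        destruct in_dec; [contradiction | lia]. }
    rewrite !finsum_const, length_seq. lra.
  - apply Nat.leb_gt in E. rewrite Rplus_0_l. apply finsum_ext. intros x _.
    rewrite ndist_snoc. destruct (in_dec Nat.eq_dec x u) as [Hin | Hnew].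
    + replace (Nat.leb m (ndist u)) with false by (symmetry; apply Nat.leb_gt; lia).
      destruct (inXm m (u ++ [x])) eqn:I; auto.
      apply inXm_snoc in I. tauto.
    + destruct (Nat.eq_dec m (S (ndist u))) as [-> | Hne].
      * assert (Hx : inXm (S (ndist u)) (u ++ [x]) = true).
        { apply inXm_snoc. rewrite ndist_snoc. destruct in_dec; [contradiction|]. auto. }
        rewrite Nat.leb_refl, Hx. f_equal. unfold stopped. rewrite tj_snoc_new by auto.
        apply firstn_all2. rewrite length_app. simpl. lia.
      * replace (Nat.leb m (S (ndist u))) with false by (symmetry; apply Nat.leb_gt; lia).
        destruct (inXm m (u ++ [x])) eqn:I; auto. apply inXm_snoc in I.
        rewrite ndist_snoc in I. destruct in_dec; [contradiction | lia].
Qed.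

Lemma Em_partial_sum (n m : nat) (f : list nat -> R) (L : nat) :
  (1 <= n)%nat -> (1 <= m)%nat -> sum_f_R0 (Em_term n m f) L = stopped_mean n m f L.
Proof.
  intros Hn Hm. assert (Hn0 : INR n <> 0) by (apply not_0_INR; lia).
  induction L as [|L IH].
  - unfold Em_term, stopped_mean. simpl. rewrite inXm_nil.
    replace (Nat.leb m (ndist [])) with false by (symmetry; apply Nat.leb_gt; auto).
    lra.
  - simpl sum_f_R0. rewrite IH. unfold stopped_mean, Em_term. rewrite !finsum_all_seqs_S.
    set (W := all_seqs n L).
    set (g := fun u => finsum (map (fun x => if inXm m (u ++ [x]) then f (u ++ [x]) else 0)
                                   (seq 0 n))).
    assert (Enew : finsum (map (fun u => finsum (map (fun x =>
               if inXm m (u ++ [x]) then f (u ++ [x]) / INR n ^ S L else 0) (seq 0 n))) W)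
                   = finsum (map g W) / INR n ^ S L).
    { rewrite <- finsum_div. apply finsum_ext. intros u _. unfold g.
      rewrite <- finsum_div. apply finsum_ext. intros x _. destruct inXm; lra. }
    assert (Eall : finsum (map (fun u => finsum (map (fun x =>
               if Nat.leb m (ndist (u ++ [x])) then f (stopped m (u ++ [x])) else 0)
               (seq 0 n))) W)
      = INR n * finsum (map (fun u => if Nat.leb m (ndist u) then f (stopped m u) else 0) W)
        + finsum (map g W)).
    { rewrite <- finsum_scal, <- finsum_plus. apply finsum_ext. intros u _.
      rewrite stopped_extend. unfold g. destruct Nat.leb; lra. }
    rewrite Enew, Eall. simpl pow. field. split; auto. apply pow_nonzero; auto.
Qed.

Lemma stopped_mean_bound (n m : nat) (f : list nat -> R) (L : nat) :
  (1 <= n)%nat -> (forall s, 0 <= f s <= 1) -> 0 <= stopped_mean n m f L <= 1.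
Proof.
  intros Hn Hf. unfold stopped_mean.
  assert (Hpos : 0 < INR n ^ L) by (apply pow_lt, lt_0_INR; lia).
  assert (Hterm : forall u, 0 <= (if Nat.leb m (ndist u) then f (stopped m u) else 0) <= 1)
    by (intros u; destruct Nat.leb; [apply Hf | lra]).
  split.
  - apply Rmult_le_pos; [apply finsum_nonneg; intros; apply Hterm|].
    left. apply Rinv_0_lt_compat. exact Hpos.
  - apply Rmult_le_reg_r with (INR n ^ L); auto. unfold Rdiv.
    rewrite Rmult_assoc, Rinv_l, Rmult_1_r, Rmult_1_l by lra.
    apply Rle_trans with (finsum (map (fun _ => 1) (all_seqs n L))).
    + apply finsum_le. intros; apply Hterm.
    + rewrite finsum_const, all_seqs_length, pow_INR. lra.
Qed.

Lemma Un_cv_ext (u v : nat -> R) (l : R) : (forall L, u L = v L) -> Un_cv u l -> Un_cv v l.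
Proof. intros E H e He. destruct (H e He) as [N HN]. exists N. intros. rewrite <- E. auto. Qed.

(** For [f] with values in [0,1] the series converges (its partial sums are
    nondecreasing and bounded by 1) and [Em n m f] is the limit of the
    stopped means. *)
Lemma Em_limit (n m : nat) (f : list nat -> R) :
  (1 <= n)%nat -> (1 <= m)%nat -> (forall s, 0 <= f s <= 1) ->
  Un_cv (stopped_mean n m f) (Em n m f).
Proof.
  intros Hn Hm Hf.
  assert (Hgrow : Un_growing (sum_f_R0 (Em_term n m f))).
  { intros L. simpl. assert (0 <= Em_term n m f (S L)); [|lra].
    apply finsum_nonneg. intros s _. destruct inXm; [|lra].
    apply Rmult_le_pos; [apply Hf|]. left. apply Rinv_0_lt_compat, pow_lt, lt_0_INR. lia. }
  assert (Hbound : has_ub (sum_f_R0 (Em_term n m f))).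
  { exists 1. intros x [i ->]. rewrite Em_partial_sum by auto.
    apply stopped_mean_bound; auto. }
  destruct (growing_cv _ Hgrow Hbound) as [l Hl].
  assert (HEm : infinite_sum (Em_term n m f) (Em n m f)).
  { unfold Em, series_val. apply epsilon_spec. exists l. exact Hl. }
  rewrite <- (uniqueness_sum _ _ _ Hl HEm).
  apply Un_cv_ext with (sum_f_R0 (Em_term n m f)); auto.
  intros; apply Em_partial_sum; auto.
Qed.

Lemma stopped_mean_ext (n m : nat) (f g : list nat -> R) (L : nat) :
  (forall s, f s = g s) -> stopped_mean n m f L = stopped_mean n m g L.
Proof. intros H. unfold stopped_mean. f_equal. apply finsum_ext. intros; destruct Nat.leb; auto. Qed.

Lemma stopped_mean_plus (n m : nat) (f g : list nat -> R) (L : nat) :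
  stopped_mean n m (fun s => f s + g s) L = stopped_mean n m f L + stopped_mean n m g L.
Proof.
  unfold stopped_mean, Rdiv. rewrite <- Rmult_plus_distr_r, <- finsum_plus. f_equal.
  apply finsum_ext. intros; destruct Nat.leb; lra.
Qed.

Lemma stopped_mean_scal (n m : nat) (c : R) (f : list nat -> R) (L : nat) :
  stopped_mean n m (fun s => c * f s) L = c * stopped_mean n m f L.
Proof.
  unfold stopped_mean, Rdiv. rewrite <- Rmult_assoc, <- finsum_scal. f_equal.
  apply finsum_ext. intros; destruct Nat.leb; lra.
Qed.

Lemma stopped_mean_finsum (n m : nat) (h : nat -> list nat -> R) (J : list nat) (L : nat) :
  stopped_mean n m (fun s => finsum (map (fun j => h j s) J)) L
  = finsum (map (fun j => stopped_mean n m (h j) L) J).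
Proof.
  induction J as [|j J IH]; simpl.
  - unfold stopped_mean. rewrite (finsum_ext _ (fun _ => 0)) by (intros; destruct Nat.leb; auto).
    rewrite finsum_const. unfold Rdiv. lra.
  - rewrite stopped_mean_plus, IH. reflexivity.
Qed.

(** By linearity [F4 n m] is the expectation of the following per-word cost,
    hence the limit of its stopped means. *)

Definition cost (n m : nat) (s : list nat) : R :=
  2 * INR m * b (INR n) * / INR (length s)
  + finsum (map (fun j => INR (tauj s j) / INR (length s) * ((INR j + 1) / 2))
                (seq 1 (m - 1))).

Lemma inv_length_bound (s : list nat) : 0 <= / INR (length s) <= 1.
Proof.
  destruct (length s) as [|l]; [simpl; rewrite Rinv_0; lra|].
  rewrite S_INR. pose proof (pos_INR l). split.
  - left. apply Rinv_0_lt_compat. lra.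
  - rewrite <- Rinv_1. apply Rinv_le_contravar; lra.
Qed.

Lemma tau_ratio_bound (s : list nat) (j : nat) : 0 <= INR (tauj s j) / INR (length s) <= 1.
Proof.
  assert (H : (tauj s j <= length s)%nat).
  { unfold tauj. pose proof (tj_le_length s (S j)). lia. }
  destruct (length s) as [|l].
  - replace (tauj s j) with 0%nat by lia. simpl. unfold Rdiv. lra.
  - apply le_INR in H. rewrite S_INR in *. pose proof (pos_INR (tauj s j)). pose proof (pos_INR l).
    split; [apply Rmult_le_pos; [lra | left; apply Rinv_0_lt_compat; lra]|].
    apply Rmult_le_reg_r with (INR l + 1); [lra|].
    unfold Rdiv. rewrite Rmult_assoc, Rinv_l by lra. lra.
Qed.

Lemma Un_cv_const (c : R) : Un_cv (fun _ => c) c.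
Proof. intros e He. exists 0%nat. intros. unfold R_dist. rewrite Rminus_diag, Rabs_R0. auto. Qed.

Lemma F4_limit (n m : nat) :
  (1 <= n)%nat -> (1 <= m)%nat -> Un_cv (stopped_mean n m (cost n m)) (F4 n m).
Proof.
  intros Hn Hm. unfold F4.
  apply Un_cv_ext with (fun L =>
      2 * INR m * b (INR n) * stopped_mean n m (fun s => / INR (length s)) L
      + finsum (map (fun j => stopped_mean n m (fun s => INR (tauj s j) / INR (length s)) L
                              * ((INR j + 1) / 2)) (seq 1 (m - 1)))).
  { intros L. unfold cost. rewrite stopped_mean_plus, stopped_mean_scal, stopped_mean_finsum.
    f_equal. apply finsum_ext. intros j _.
    rewrite Rmult_comm, <- stopped_mean_scal. apply stopped_mean_ext. intros; lra. }
  apply CV_plus.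
  - apply CV_mult; [apply Un_cv_const|]. apply Em_limit; auto. intros; apply inv_length_bound.
  - induction (seq 1 (m - 1)) as [|j J IH]; simpl; [apply Un_cv_const|].
    apply CV_plus; auto. apply CV_mult; [|apply Un_cv_const].
    apply Em_limit; auto. intros; apply tau_ratio_bound.
Qed.

Lemma stopped_length (m : nat) (u : list nat) :
  (m <= ndist u)%nat -> length (stopped m u) = tj u m.
Proof. intros. unfold stopped. apply firstn_length_le, tj_le_length. Qed.

Lemma stopped_tau (m : nat) (u : list nat) (j : nat) :
  (m <= ndist u)%nat -> (S j <= m)%nat -> tauj (stopped m u) j = tauj u j.
Proof.
  intros H1 H2. unfold tauj, stopped.
  rewrite !tj_firstn; auto; try apply tj_le_length; try lia; apply tj_mono; lia.
Qed.

Lemma cost_stopped (n m : nat) (u : list nat) : (1 <= m)%nat -> (m <= ndist u)%nat ->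
  cost n m (stopped m u) =
  (2 * INR m * b (INR n) + finsum (map (fun j => INR (tauj u j) * ((INR j + 1) / 2)) (seq 1 (m - 1))))
  / (INR m + finsum (map (fun j => INR (tauj u j)) (seq 1 (m - 1)))).
Proof.
  intros H1 H2. unfold cost. rewrite stopped_length, tj_telescope by auto.
  rewrite Rdiv_plus_distr. f_equal. rewrite <- finsum_div.
  apply finsum_ext. intros j Hj. apply in_seq in Hj.
  rewrite stopped_tau by lia. unfold Rdiv. ring.
Qed.

Lemma frac_le (x y z w : R) : 0 < y -> 0 < w -> x * w <= z * y -> x / y <= z / w.
Proof.
  intros Hy Hw H. apply Rmult_le_reg_r with (y * w); [nra|].
  replace (x / y * (y * w)) with (x * w) by (field; lra).
  replace (z / w * (y * w)) with (z * y) by (field; lra). exact H.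
Qed.

(** Adding mass whose weight is at least [2 beta] to a ratio at most [2 beta]
    can only increase the ratio. *)
Lemma ratio_grows (K M beta a c al g : R) :
  0 < K -> K <= M -> 0 <= a -> 0 <= al -> c <= 2 * beta * a -> 2 * beta * al <= g ->
  (2 * K * beta + c) / (K + a) <= (2 * M * beta + (c + g)) / (M + (a + al)).
Proof.
  intros. apply frac_le; try lra.
  assert (0 <= (M - K) * (2 * beta * a - c)) by (apply Rmult_le_pos; lra).
  assert (0 <= (K + a) * (g - 2 * beta * al)) by (apply Rmult_le_pos; lra).
  nra.
Qed.

Section Pathwise.

(** Fix [k] with [k <= 4 b(n) <= k + 1]: the waiting times [tau_j] with
    [j < k] have weight [(j+1)/2 <= 2 b(n)], those with [j >= k] have weight
    [>= 2 b(n)]. *)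
Variables (n k : nat).
Hypothesis k_pos : (1 <= k)%nat.
Hypothesis k_below : INR k <= 4 * b (INR n).
Hypothesis k_above : 4 * b (INR n) <= INR k + 1.

Lemma sum_tau_nonneg (u : list nat) (J : list nat) :
  0 <= finsum (map (fun j => INR (tauj u j)) J).
Proof. apply finsum_nonneg. intros; apply pos_INR. Qed.

Lemma cost_stopped_le (u : list nat) :
  (k <= ndist u)%nat -> 0 <= cost n k (stopped k u) <= 2 * b (INR n).
Proof.
  intros Hu. rewrite cost_stopped by auto.
  set (a := finsum (map (fun j => INR (tauj u j)) (seq 1 (k - 1)))).
  set (c := finsum (map (fun j => INR (tauj u j) * ((INR j + 1) / 2)) (seq 1 (k - 1)))).
  assert (Ha : 0 <= a) by apply sum_tau_nonneg.
  assert (Hc0 : 0 <= c).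
  { apply finsum_nonneg. intros j _. pose proof (pos_INR (tauj u j)). pose proof (pos_INR j).
    apply Rmult_le_pos; lra. }
  assert (Hc : c <= 2 * b (INR n) * a).
  { unfold a, c. rewrite <- finsum_scal. apply finsum_le. intros j Hj. apply in_seq in Hj.
    assert (INR j + 1 <= INR k) by (rewrite <- S_INR; apply le_INR; lia).
    pose proof (pos_INR (tauj u j)). nra. }
  assert (HK : 1 <= INR k) by (apply (le_INR 1); auto).
  split; [apply Rmult_le_pos; [nra | left; apply Rinv_0_lt_compat; lra]|].
  replace (2 * b (INR n)) with (2 * b (INR n) * (INR k + a) / (INR k + a)) by (field; lra).
  apply frac_le; try lra. apply Rmult_le_compat_r; lra.
Qed.

Lemma cost_stopped_mono (m : nat) (u : list nat) :
  (k <= m)%nat -> (m <= ndist u)%nat -> cost n k (stopped k u) <= cost n m (stopped m u).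
Proof.
  intros Hkm Hm. rewrite !cost_stopped by lia.
  assert (Hsplit : seq 1 (m - 1) = seq 1 (k - 1) ++ seq k (m - k)).
  { replace (m - 1)%nat with ((k - 1) + (m - k))%nat by lia. rewrite seq_app. do 2 f_equal. lia. }
  rewrite Hsplit, !map_app, !finsum_app.
  assert (HK : 1 <= INR k) by (apply (le_INR 1); auto).
  apply ratio_grows.
  - lra.
  - apply le_INR. exact Hkm.
  - apply sum_tau_nonneg.
  - apply sum_tau_nonneg.
  - rewrite <- finsum_scal. apply finsum_le. intros j Hj. apply in_seq in Hj.
    assert (INR j + 1 <= INR k) by (rewrite <- S_INR; apply le_INR; lia).
    pose proof (pos_INR (tauj u j)). nra.
  - rewrite <- finsum_scal. apply finsum_le. intros j Hj. apply in_seq in Hj.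
    assert (INR k <= INR j) by (apply le_INR; lia).
    pose proof (pos_INR (tauj u j)). nra.
Qed.

End Pathwise.

(** * Words missing a letter are exponentially rare *)

Lemma missing_letter (n : nat) (u : list nat) :
  (forall y, In y u -> (y < n)%nat) -> (ndist u < n)%nat -> exists v, (v < n)%nat /\ ~ In v u.
Proof.
  intros Hu Hd. apply NNPP. intros Hno.
  assert (Hincl : incl (seq 0 n) (nodup Nat.eq_dec u)).
  { intros v Hv. apply in_seq in Hv. apply nodup_In. apply NNPP. intro Hn.
    apply Hno. exists v. split; [lia | auto]. }
  pose proof (NoDup_incl_length (seq_NoDup n 0) Hincl). rewrite length_seq in *.
  unfold ndist in Hd. lia.
Qed.

Definition avoids (v : nat) (u : list nat) : R := if in_dec Nat.eq_dec v u then 0 else 1.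

Lemma count_avoiding (n v L : nat) : (v < n)%nat ->
  finsum (map (avoids v) (all_seqs n L)) = INR (n - 1) ^ L.
Proof.
  intros Hv. induction L as [|L IH]; [simpl; unfold avoids; simpl; lra|].
  rewrite finsum_all_seqs_S. simpl pow. rewrite <- IH, <- finsum_scal.
  apply finsum_ext. intros u _.
  assert (Hletter : forall c, finsum (map (fun x => if Nat.eq_dec x v then 0 else 1) (seq 0 c))
                              = INR c - (if Nat.ltb v c then 1 else 0)).
  { induction c as [|c IHc]; [simpl; lra|].
    rewrite seq_S, map_app, finsum_app, IHc, S_INR. simpl.
    destruct (Nat.ltb_spec v c); destruct (Nat.ltb_spec v (S c));
      destruct (Nat.eq_dec c v); try lia; lra. }
  rewrite (finsum_ext _ (fun x => avoids v u * (if Nat.eq_dec x v then 0 else 1))).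
  - rewrite finsum_scal, Hletter. replace (Nat.ltb v n) with true by (symmetry; apply Nat.ltb_lt; auto).
    rewrite minus_INR by lia. simpl INR. lra.
  - intros x _. unfold avoids.
    destruct (in_dec Nat.eq_dec v (u ++ [x])) as [I | I];
      destruct (in_dec Nat.eq_dec v u); destruct (Nat.eq_dec x v); try lra;
      exfalso; rewrite in_app_iff in I; simpl in I; intuition.
Qed.

Lemma count_incomplete (n L : nat) :
  finsum (map (fun u => if Nat.ltb (ndist u) n then 1 else 0) (all_seqs n L))
  <= INR n * INR (n - 1) ^ L.
Proof.
  assert (Havoids : forall v u, 0 <= avoids v u) by (intros; unfold avoids; destruct in_dec; lra).
  apply Rle_trans with
    (finsum (map (fun u => finsum (map (fun v => avoids v u) (seq 0 n))) (all_seqs n L))).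
  - apply finsum_le. intros u Hu. destruct (Nat.ltb (ndist u) n) eqn:E.
    + apply Nat.ltb_lt in E.
      destruct (missing_letter n u (all_seqs_letters _ _ _ Hu) E) as [v [Hv Hnot]].
      apply Rle_trans with (avoids v u).
      * unfold avoids. destruct in_dec; [contradiction | lra].
      * apply (finsum_term_le (fun v => avoids v u)); [apply in_seq; lia | auto].
    + apply finsum_nonneg. auto.
  - rewrite (finsum_swap (fun u v => avoids v u)).
    rewrite (finsum_ext _ (fun _ => INR (n - 1) ^ L)).
    + rewrite finsum_const, length_seq. lra.
    + intros v Hv. apply in_seq in Hv. apply count_avoiding. lia.
Qed.

Lemma geometric_cv (r : R) : 0 <= r < 1 -> Un_cv (fun L => r ^ L) 0.
Proof.
  intros Hr e He. destruct (pow_lt_1_zero r ltac:(rewrite Rabs_pos_eq; lra) e He) as [N HN].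
  exists N. intros L HL. unfold R_dist. rewrite Rminus_0_r. auto.
Qed.

Section Comparison.

Variables (n k : nat).
Hypothesis n_pos : (1 <= n)%nat.
Hypothesis k_pos : (1 <= k)%nat.
Hypothesis k_below : INR k <= 4 * b (INR n).
Hypothesis k_above : 4 * b (INR n) <= INR k + 1.

(** For words of length [L], the cost of stopping at [t_k] exceeds the cost
    of stopping at [t_m] only on words that have not reached [m <= n]
    letters, where it is at most [2 b(n)]. *)
Lemma stopped_mean_cost_le (m L : nat) : (k <= m)%nat -> (m <= n)%nat ->
  stopped_mean n k (cost n k) L
  <= stopped_mean n m (cost n m) L + 2 * b (INR n) * (INR n * (INR (n - 1) / INR n) ^ L).
Proof.
  intros Hkm Hmn. unfold stopped_mean.
  assert (Hpos : 0 < INR n ^ L) by (apply pow_lt, lt_0_INR; lia).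
  assert (Hb : 0 <= b (INR n)) by (pose proof (le_INR 1 k k_pos); simpl in *; lra).
  replace (2 * b (INR n) * (INR n * (INR (n - 1) / INR n) ^ L))
    with (2 * b (INR n) * (INR n * INR (n - 1) ^ L) / INR n ^ L)
    by (unfold Rdiv; rewrite Rpow_mult_distr, pow_inv; field; lra).
  rewrite <- Rdiv_plus_distr. apply Rmult_le_compat_r; [left; apply Rinv_0_lt_compat; auto|].
  eapply Rle_trans; [|apply Rplus_le_compat_l, Rmult_le_compat_l, count_incomplete; lra].
  rewrite <- finsum_scal, <- finsum_plus. apply finsum_le. intros u _.
  destruct (Nat.leb_spec k (ndist u)) as [Hk | Hk].
  - pose proof (cost_stopped_le n k k_pos k_below k_above u Hk).
    destruct (Nat.leb_spec m (ndist u)) as [Hm | Hm].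
    + pose proof (cost_stopped_mono n k k_pos k_below k_above m u Hkm Hm).
      destruct Nat.ltb; lra.
    + replace (Nat.ltb (ndist u) n) with true by (symmetry; apply Nat.ltb_lt; lia). lra.
  - replace (Nat.leb m (ndist u)) with false by (symmetry; apply Nat.leb_gt; lia).
    destruct Nat.ltb; lra.
Qed.

(** Letting [L -> oo]: the error term vanishes since [(n-1)/n < 1]. *)
Lemma F4_le (m : nat) : (k <= m)%nat -> (m <= n)%nat -> F4 n k <= F4 n m.
Proof.
  intros Hkm Hmn.
  assert (Hratio : 0 <= INR (n - 1) / INR n < 1).
  { assert (1 <= INR n) by (apply (le_INR 1); auto).
    rewrite minus_INR by lia. simpl INR. split.
    - apply Rmult_le_pos; [lra | left; apply Rinv_0_lt_compat; lra].
    - apply Rmult_lt_reg_r with (INR n); [lra|]. unfold Rdiv.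
      rewrite Rmult_assoc, Rinv_l by lra. lra. }
  apply (Rle_cv_lim (fun L => stopped_mean_cost_le m L Hkm Hmn)).
  - apply F4_limit; lia.
  - replace (F4 n m) with (F4 n m + 2 * b (INR n) * (INR n * 0)) by ring.
    apply CV_plus; [apply F4_limit; lia|].
    apply CV_mult; [apply Un_cv_const|]. apply CV_mult; [apply Un_cv_const|].
    apply geometric_cv. exact Hratio.
Qed.

End Comparison.

Definition argmin_step (FF : nat -> R) (best k : nat) : nat :=
  if Rlt_dec (FF k) (FF best) then k else best.

Lemma argmin_fold_spec (FF : nat -> R) (c : nat) : forall a best,
  (fold_left (argmin_step FF) (seq a c) best = best
   \/ (a <= fold_left (argmin_step FF) (seq a c) best < a + c)%nat) /\
  FF (fold_left (argmin_step FF) (seq a c) best) <= FF best /\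
  forall x, (a <= x < a + c)%nat -> FF (fold_left (argmin_step FF) (seq a c) best) <= FF x.
Proof.
  induction c as [|c IH]; intros a best; simpl.
  - repeat split; [left; auto | lra | intros; lia].
  - destruct (IH (S a) (argmin_step FF best a)) as [H1 [H2 H3]].
    assert (Hstep : (argmin_step FF best a = a /\ FF a < FF best)
                    \/ (argmin_step FF best a = best /\ ~ FF a < FF best))
      by (unfold argmin_step; destruct Rlt_dec; auto).
    destruct Hstep as [[E Hlt] | [E Hge]]; rewrite E in H1, H2, H3 |- *;
      repeat split; try (destruct H1; lia); try lra;
      intros x Hx; (destruct (Nat.eq_dec x a); [subst; lra | apply H3; lia]).
Qed.

Lemma argmin_fold_keep (FF : nat -> R) (c : nat) : forall a best,
  (forall x, (a <= x < a + c)%nat -> FF best <= FF x) ->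
  fold_left (argmin_step FF) (seq a c) best = best.
Proof.
  induction c as [|c IH]; intros a best H; simpl; auto.
  unfold argmin_step at 2. destruct (Rlt_dec (FF a) (FF best)).
  - specialize (H a ltac:(lia)). lra.
  - apply IH. intros; apply H; lia.
Qed.

Lemma mopt_le_n (n : nat) : (1 <= n)%nat -> (mopt n <= n)%nat.
Proof.
  intros Hn. destruct (argmin_fold_spec (F4 n) (n - 1) 2 1) as [H _].
  unfold mopt. fold (argmin_step (F4 n)). destruct H; lia.
Qed.

Lemma mopt_le (n k : nat) : (1 <= k)%nat -> (k < n)%nat ->
  (forall m, (k < m <= n)%nat -> F4 n k <= F4 n m) -> (mopt n <= k)%nat.
Proof.
  intros Hk Hkn H. unfold mopt. fold (argmin_step (F4 n)).
  replace (n - 1)%nat with ((k - 1) + (n - k))%nat by lia.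
  rewrite seq_app, fold_left_app. replace (2 + (k - 1))%nat with (S k) by lia.
  destruct (argmin_fold_spec (F4 n) (k - 1) 2 1) as [H1 [H2 H3]].
  set (r := fold_left (argmin_step (F4 n)) (seq 2 (k - 1)) 1%nat) in *.
  assert (Hr : (r <= k)%nat) by (destruct H1; lia).
  assert (Hrk : F4 n r <= F4 n k).
  { destruct (Nat.eq_dec k 1) as [-> | ]; [destruct H1 as [-> | ]; [lra | lia] | apply H3; lia]. }
  rewrite argmin_fold_keep; auto.
  intros x Hx. specialize (H x ltac:(lia)). lra.
Qed.

Lemma ln2_pos : 0 < ln 2.
Proof. rewrite <- ln_1. apply ln_increasing; lra. Qed.

Lemma ln_le (x y : R) : 0 < x -> x <= y -> ln x <= ln y.
Proof. intros Hx [H | H]; [left; apply ln_increasing; auto | subst; lra]. Qed.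

Lemma log2_ge (x : R) (c : nat) : 2 ^ c <= x -> INR c <= log2 x.
Proof.
  intros H. pose proof ln2_pos. unfold log2.
  assert (0 < 2 ^ c) by (apply pow_lt; lra).
  apply Rmult_le_reg_r with (ln 2); auto. unfold Rdiv.
  rewrite Rmult_assoc, Rinv_l, Rmult_1_r by lra.
  rewrite <- ln_pow by lra. apply ln_le; lra.
Qed.

(** [b(n) <= log2(n+1)], since [log2(n+1) <= n]. *)
Lemma b_le_log2 (n : nat) : (1 <= n)%nat -> b (INR n) <= log2 (INR n + 1).
Proof.
  intros Hn. assert (HN : 1 <= INR n) by (apply (le_INR 1); auto).
  assert (Hpow : INR n + 1 <= 2 ^ n).
  { clear HN. induction n as [|n IH]; [lia|]. rewrite S_INR. simpl.
    destruct (Nat.eq_dec n 0) as [-> | ]; [simpl; lra|].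
    assert (1 <= INR n) by (apply (le_INR 1); lia). specialize (IH ltac:(lia)). lra. }
  assert (Hlog : log2 (INR n + 1) <= INR n).
  { pose proof ln2_pos. unfold log2.
    apply Rmult_le_reg_r with (ln 2); auto. unfold Rdiv.
    rewrite Rmult_assoc, Rinv_l, Rmult_1_r by lra.
    rewrite <- ln_pow by lra. apply ln_le; lra. }
  assert (Hlog0 : 0 <= log2 (INR n + 1)) by (apply (log2_ge _ 0); simpl; lra).
  unfold b.
  replace ((1 + 1 / INR n) * log2 (INR n + 1) - 1)
    with (log2 (INR n + 1) + (log2 (INR n + 1) / INR n - 1)) by (field; lra).
  assert (log2 (INR n + 1) / INR n <= 1).
  { apply Rmult_le_reg_r with (INR n); [lra|]. unfold Rdiv.
    rewrite Rmult_assoc, Rinv_l by lra. lra. }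
  lra.
Qed.

Lemma b_ge_half (n : nat) : (1 <= n)%nat -> 1 / 2 <= b (INR n).
Proof.
  intros Hn. unfold b.
  destruct (Nat.le_gt_cases 3 n) as [H3 | H3].
  - assert (3 <= INR n) by (apply (le_INR 3) in H3; simpl in H3; lra).
    assert (2 <= log2 (INR n + 1)) by (apply (log2_ge _ 2); simpl; lra).
    assert (0 < 1 / INR n) by (apply Rdiv_lt_0_compat; lra).
    nra.
  - assert (Hn12 : INR n = 1 \/ INR n = 2)
      by (destruct n as [|[|[|n]]]; [lia | left | right | lia]; simpl; lra).
    assert (1 <= log2 (INR n + 1)) by (apply (log2_ge _ 1); simpl; lra).
    destruct Hn12 as [E | E]; rewrite E in *; unfold Rdiv; rewrite ?Rinv_1; lra.
Qed.

Lemma nat_just_below (x : R) : 1 < x -> exists k, (1 <= k)%nat /\ INR k < x <= INR k + 1.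
Proof.
  intros Hx. destruct (archimed (- x)) as [A1 A2].
  set (z := (- up (- x))%Z).
  assert (Hz : IZR z < x <= IZR z + 1) by (unfold z; rewrite opp_IZR; lra).
  assert (Hz1 : (0 < z)%Z) by (apply lt_IZR; lra).
  exists (Z.to_nat z). rewrite INR_IZR_INZ, Z2Nat.id by lia. split; [lia | exact Hz].
Qed.

(** With [k < 4 b(n) <= k + 1], [F] takes at [k] a value at most all later
    values up to [n], so the first minimizer satisfies [m_opt(n) <= k]
    (or [m_opt(n) <= n <= k] when [k >= n]). *)
Theorem proposition2 (n : nat) (hn : (1 <= n)%nat) :
  INR (mopt n) < 4 * b (INR n) /\ 4 * b (INR n) <= 4 * log2 (INR n + 1).
Proof.
  split; [| pose proof (b_le_log2 n hn); lra].
  pose proof (b_ge_half n hn).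
  destruct (nat_just_below (4 * b (INR n))) as [k [Hk [Hbelow Habove]]]; [lra|].
  assert (Hmopt : (mopt n <= k)%nat).
  { destruct (Nat.lt_ge_cases k n) as [Hkn | Hnk].
    - apply mopt_le; auto. intros m Hm. apply F4_le; auto; lra || lia.
    - pose proof (mopt_le_n n hn). lia. }
  apply le_INR in Hmopt. lra.
Qed.
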